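(* Let $N\ge1$ be odd, let $A=A(h)$ be the $(N+2)\times(N+2)$ matrix defined in the context and $C=e_2^T=(0,1,0,\dots,0)$. Then for every real value of the parameters $h_\alpha,h_\beta,h_1,\dots,h_{N-1}$ the pair $(A,C)$ is unobservable, i.e. the observability matrix $(C^T,\ (CA)^T,\ \dots,\ (CA^{N+1})^T)^T$ has rank strictly less than $N+2$.
   Context: For an integer $N\ge1$ and real parameters $h=(h_\alpha,h_\beta,h_1,\dots,h_{N-1})$, set $(c_1,c_2,c_3,\dots,c_{N+1})=(h_\alpha,h_\beta,h_1,\dots,h_{N-1})$ and let $A(h)$ be the real $(N+2)\times(N+2)$ tridiagonal matrix with $A_{j,j+1}=c_j$, $A_{j+1,j}=-c_j$ for $j=1,\dots,N+1$ and all other entries zero. $e_j$ denotes the $j$-th standard basis column vector. *)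

(* Real parameters are taken in an arbitrary real field R
   (the statement is purely algebraic). *)
From HB Require Import structures.
From mathcomp Require Import all_boot all_order all_algebra.
Set Implicit Arguments. Unset Strict Implicit. Unset Printing Implicit Defensive.
Import Order.TTheory GRing.Theory Num.Theory.
Local Open Scope ring_scope.

(* Coefficient sequence (c_1,...,c_{N+1}) = (h_alpha, h_beta, h_1, ..., h_{N-1}),
   0-indexed: c 0 = h_alpha, c 1 = h_beta, c (k+2) = h k  (h k = h_{k+1}). *)
Definition coef_seq (R : nzRingType) (N : nat) (ha hb : R) (h : 'I_N.-1 -> R)
  (j : nat) : R :=
  match j with
  | 0 => ha
  | 1 => hb
  | k.+2 => if insub k : option 'I_N.-1 is Some i then h i else 0
  end.

Definition Amat (R : nzRingType) (N : nat) (ha hb : R) (h : 'I_N.-1 -> R)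
  : 'M[R]_(N.+2) :=
  \matrix_(i, j)
    (if j == i.+1 :> nat then @coef_seq R N ha hb h i
     else if i == j.+1 :> nat then - @coef_seq R N ha hb h j
     else 0).

(* C = e_2^T : row vector with a 1 in (1-indexed) position 2. *)
Definition Cvec (R : nzRingType) (N : nat) : 'rV[R]_(N.+2) :=
  \row_(j < N.+2) (if j == 1 :> nat then 1 else 0).

Definition obs_mx (R : nzRingType) (n : nat) (A : 'M[R]_n) (C : 'rV[R]_n)
  : 'M[R]_n :=
  \matrix_(k < n, j < n) (C *m A ^+ k) 0 j.

From HB Require Import structures.
From mathcomp Require Import all_boot all_order all_algebra.
Set Implicit Arguments. Unset Strict Implicit. Unset Printing Implicit Defensive.
Import Order.TTheory GRing.Theory Num.Theory.
Local Open Scope ring_scope.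

(* The matrix A only connects indices of opposite parity, so starting from
   C = e_2^T the entry (C A^k)_j vanishes unless j + k is odd.  Hence the
   rows of the observability matrix with even k live on the (N+1)/2 odd (0-based)
   coordinates, while there are only (N+1)/2 rows with odd k; the rank is at
   most (N+1)/2 + (N+1)/2 = N+1 < N+2. *)

Lemma card_odd_ord n : #|[pred i : 'I_n | odd i]| = n./2.
Proof.
rewrite -sum1_card big_mkcond /=.
have -> : (\sum_(i < n) (if odd i then 1 else 0) = \sum_(i < n) odd i)%N.
  by apply: eq_bigr => i _; case: odd.
elim: n => [|n IHn]; first by rewrite big_ord0.
by rewrite big_ord_recr /= IHn addnC -uphalf_half.
Qed.

Section RankSupport.

Variable F : fieldType.

Lemma mxrank_row_support m n (A : 'M[F]_(m, n)) (P : {pred 'I_m}) :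
  (forall i, i \notin P -> row i A = 0) -> (\rank A <= #|P|)%N.
Proof.
move=> A0; apply: leq_trans (rank_leq_row (rowsub (@enum_val _ (mem P)) A)).
apply/mxrankS/row_subP => i.
have [Pi | nPi] := boolP (i \in P); last by rewrite A0 ?sub0mx.
by rewrite -(enum_rankK_in Pi Pi) -row_rowsub row_sub.
Qed.

Lemma mxrank_col_support m n (A : 'M[F]_(m, n)) (P : {pred 'I_n}) :
  (forall j, j \notin P -> col j A = 0) -> (\rank A <= #|P|)%N.
Proof.
move=> A0; rewrite -mxrank_tr; apply: mxrank_row_support => j /A0 Aj0.
by rewrite -tr_col Aj0 trmx0.
Qed.

End RankSupport.

Definition parity_alternating (R : pzRingType) n (A : 'M[R]_n) :=
  forall i j : 'I_n, ~~ odd (i + j) -> A i j = 0.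

Lemma parity_alternating_pow (R : pzRingType) n (A : 'M[R]_n) (v : 'rV[R]_n)
    (p : bool) :
  parity_alternating A -> (forall j : 'I_n, odd j != p -> v 0 j = 0) ->
  forall k (j : 'I_n), odd (j + k) != p -> (v *m A ^+ k) 0 j = 0.
Proof.
move=> Aalt v0; elim=> [|k IHk] j jk.
  by rewrite expr0 mulmx1 v0 // -(addn0 j).
rewrite exprSr mulmxA mxE big1 // => i _.
have [ik | ik] := eqVneq (odd (i + k)) p; last by rewrite IHk ?mul0r.
rewrite Aalt ?mulr0 //; move: jk; rewrite -ik addnS /= !oddD.
by case: (odd i) (odd j) (odd k) => [] [] [].
Qed.

Lemma Amat_parity_alternating (R : nzRingType) N ha hb (h : 'I_N.-1 -> R) :
  parity_alternating (Amat ha hb h).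
Proof.
move=> i j ij; rewrite mxE.
have [ji | _] := eqVneq (j : nat) i.+1.
  by rewrite ji addnS addnn /= odd_double in ij.
have [ij' | //] := eqVneq (i : nat) j.+1.
by rewrite ij' addSn addnn /= odd_double in ij.
Qed.

Lemma obs_mx_Amat_parity (R : nzRingType) N ha hb (h : 'I_N.-1 -> R)
    (k j : 'I_N.+2) :
  ~~ odd (j + k) -> obs_mx (Amat ha hb h) (Cvec R N) k j = 0.
Proof.
move=> jk; rewrite mxE (parity_alternating_pow (p := true)) ?(negPf jk) //.
  exact: Amat_parity_alternating.
by move=> i odd_i; rewrite mxE; case: eqP => // i1; rewrite i1 in odd_i.
Qed.

Theorem lemma3 (R : realFieldType) (N : nat) (hN : (1 <= N)%N) (hodd : odd N)
  (ha hb : R) (h : 'I_N.-1 -> R) :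
  (\rank (obs_mx (@Amat R N ha hb h) (Cvec R N)) < N.+2)%N.
Proof.
set M := obs_mx _ _; pose odds := [pred i : 'I_N.+2 | odd i].
pose Meven : 'M[R]_N.+2 := \matrix_(k, j) (if odd k then 0 else M k j).
pose Modd : 'M[R]_N.+2 := \matrix_(k, j) (if odd k then M k j else 0).
have -> : M = Meven + Modd.
  by apply/matrixP => k j; rewrite !mxE; case: odd; rewrite ?add0r ?addr0.
have rk_even : (\rank Meven <= #|odds|)%N.
  apply: mxrank_col_support => j; rewrite inE => odd_j; apply/matrixP => k i.
  rewrite [RHS]mxE 2!mxE; case: ifP => // odd_k.
  by rewrite /M obs_mx_Amat_parity // oddD odd_k (negPf odd_j).
have rk_odd : (\rank Modd <= #|odds|)%N.
  apply: mxrank_row_support => k; rewrite inE => odd_k; apply/matrixP => i j.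
  by rewrite !mxE (negPf odd_k).
apply: leq_ltn_trans (mxrank_add _ _) _.
apply: leq_ltn_trans (leq_add rk_even rk_odd) _.
by rewrite card_odd_ord addnn -[in X in (_ < X)%N](odd_double_half N.+2) /= hodd.
Qed.
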